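(* Let $\mathcal{F}(X)\subseteq\Psi$, with $\Psi$ carrying an admissible hyperspace topology $\Delta$. (i) If $(X,\mathbb{F})$ is weakly mixing of all orders, then $(\Psi,\overline{\mathbb{F}})$ is weakly mixing. (ii) If moreover $\mathbb{F}$ is commutative and there is a base $\beta$ for the topology of $X$ with $U^+=\{A\in\Psi:A\subseteq U\}\in\Delta$ for every $U\in\beta$, then $(\Psi,\overline{\mathbb{F}})$ weakly mixing implies $(X,\mathbb{F})$ weakly mixing of all orders.
   Context: $(X,d)$ compact metric, $\mathbb{F}=(f_n)$ continuous self-maps, $\omega_n=f_n\circ\cdots\circ f_1$; $\mathbb{F}$ is commutative if $f_n\circ f_m=f_m\circ f_n$ for all $n,m$. The system is weakly mixing of order $k$ if for any non-empty open $U_1,\dots,U_k,V_1,\dots,V_k$ there is $n$ with $\omega_n(U_i)\cap V_i\neq\emptyset$ for all $i$; weakly mixing means of order 2. $\mathcal{F}(X)$ denotes non-empty finite subsets; $\Psi\subseteq\mathcal{K}(X)$ is invariant under all $\omega_k$, and the induced system acts by $\overline{\omega}_k(A)=\omega_k(A)$, with mixing notions defined analogously on $(\Psi,\Delta)$. An admissible topology ($x\mapsto\{x\}$ continuous) is of hit-and-miss or hit-and-far-miss type: generated by $U^-=\{A:A\cap U\neq\emptyset\}$ ($U$ open) and sets $(E^c)^+=\{A:A\subseteq E^c\}$ (resp. $(E^c)^{++}=\{A:\exists\varepsilon>0, S_\varepsilon(A)\subseteq E^c\}$) for $E$ in a fixed family of closed sets; induced maps are assumed continuous. *)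

From Stdlib Require Import Reals List.
Open Scope R_scope.

Definition set (T : Type) := T -> Prop.

Section Defs.
Context {X : Type} (d : X -> X -> R).

Definition is_metric : Prop :=
  (forall x y, 0 <= d x y) /\
  (forall x y, d x y = 0 <-> x = y) /\
  (forall x y, d x y = d y x) /\
  (forall x y z, d x z <= d x y + d y z).

Definition is_open (U : set X) : Prop :=
  forall x, U x -> exists r, 0 < r /\ forall y, d x y < r -> U y.

Definition is_closed (E : set X) : Prop := is_open (fun x => ~ E x).

Definition compact_set (K : set X) : Prop :=
  forall C : set (set X),
    (forall U, C U -> is_open U) ->
    (forall x, K x -> exists U, C U /\ U x) ->
    exists l : list (set X),
      (forall U, In U l -> C U) /\ (forall x, K x -> exists U, In U l /\ U x).

Definition compact_space : Prop := compact_set (fun _ => True).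

Definition continuous (g : X -> X) : Prop :=
  forall U, is_open U -> is_open (fun x => U (g x)).

Definition is_base (beta : set (set X)) : Prop :=
  (forall B, beta B -> is_open B) /\
  (forall U x, is_open U -> U x -> exists B, beta B /\ B x /\ forall y, B y -> U y).

Definition nbhd (A : set X) (eps : R) : set X :=
  fun x => exists a, A a /\ d x a < eps.

End Defs.

Definition img {X : Type} (g : X -> X) (A : set X) : set X :=
  fun y => exists x, A x /\ y = g x.

Definition singleton {X : Type} (x : X) : set X := fun y => y = x.

Definition nonempty {T : Type} (A : set T) : Prop := exists a, A a.

Definition finite_nonempty {X : Type} (A : set X) : Prop :=
  exists l : list X, l <> nil /\ forall y, A y <-> In y l.

(* The sequence F = (f_1, f_2, ...) is represented by f : nat -> X -> X
   with f i = f_{i+1}.  omega f n = f_n o ... o f_1 (omega f 0 = id). *)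
Fixpoint omega {X : Type} (f : nat -> X -> X) (n : nat) (x : X) : X :=
  match n with
  | O => x
  | S m => f m (omega f m x)
  end.

Definition commutative {X : Type} (f : nat -> X -> X) : Prop :=
  forall n m x, f n (f m x) = f m (f n x).

Definition wm_order {T : Type} (isopen : set T -> Prop) (phi : nat -> T -> T)
    (k : nat) : Prop :=
  forall U V : nat -> set T,
    (forall i, (i < k)%nat ->
       isopen (U i) /\ isopen (V i) /\ nonempty (U i) /\ nonempty (V i)) ->
    exists n, (1 <= n)%nat /\
      forall i, (i < k)%nat -> exists a, U i a /\ V i (phi n a).

Definition weakly_mixing {T : Type} (isopen : set T -> Prop) (phi : nat -> T -> T) : Prop :=
  wm_order isopen phi 2.

Definition wm_all_orders {T : Type} (isopen : set T -> Prop) (phi : nat -> T -> T) : Prop :=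
  forall k, wm_order isopen phi k.

Definition induced {X : Type} (f : nat -> X -> X) (n : nat) (A : set X) : set X :=
  img (omega f n) A.

Definition hit {X : Type} (Psi : set (set X)) (U : set X) : set (set X) :=
  fun A => Psi A /\ exists x, A x /\ U x.

Definition miss {X : Type} (Psi : set (set X)) (E : set X) : set (set X) :=
  fun A => Psi A /\ forall x, A x -> ~ E x.

Definition farmiss {X : Type} (d : X -> X -> R) (Psi : set (set X)) (E : set X)
  : set (set X) :=
  fun A => Psi A /\ exists eps, 0 < eps /\ forall x, nbhd d A eps x -> ~ E x.

Definition upper {X : Type} (Psi : set (set X)) (U : set X) : set (set X) :=
  fun A => Psi A /\ forall x, A x -> U x.

(* Delta is the topology on Psi generated by the subbase [Sub]:
   open sets are exactly the subsets W of Psi such that each point of W lies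
   in a finite intersection of subbasic sets (within Psi) contained in W. *)
Definition generated_by {X : Type} (Psi : set (set X))
    (Sub : set (set (set X))) (Delta : set (set (set X))) : Prop :=
  forall W,
    Delta W <->
    ((forall A, W A -> Psi A) /\
     forall A, W A ->
       exists l : list (set (set X)),
         (forall S, In S l -> Sub S) /\ (forall S, In S l -> S A) /\
         (forall B, Psi B -> (forall S, In S l -> S B) -> W B)).

Definition same_set {T : Type} (S S' : set T) : Prop := forall a, S a <-> S' a.

Definition hm_subbase {X : Type} (d : X -> X -> R) (Psi : set (set X))
    (Efam : set (set X)) : set (set (set X)) :=
  fun S => (exists U, is_open d U /\ same_set S (hit Psi U)) \/
           (exists E, Efam E /\ same_set S (miss Psi E)).

Definition hfm_subbase {X : Type} (d : X -> X -> R) (Psi : set (set X))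
    (Efam : set (set X)) : set (set (set X)) :=
  fun S => (exists U, is_open d U /\ same_set S (hit Psi U)) \/
           (exists E, Efam E /\ same_set S (farmiss d Psi E)).

Definition hit_miss_type {X : Type} (d : X -> X -> R) (Psi : set (set X))
    (Delta : set (set (set X))) : Prop :=
  exists Efam : set (set X),
    (forall E, Efam E -> is_closed d E) /\
    (generated_by Psi (hm_subbase d Psi Efam) Delta \/
     generated_by Psi (hfm_subbase d Psi Efam) Delta).

Definition admissible {X : Type} (d : X -> X -> R) (Psi : set (set X))
    (Delta : set (set (set X))) : Prop :=
  forall W, Delta W -> is_open d (fun x => W (singleton x)).

Definition induced_continuous {X : Type} (f : nat -> X -> X) (Psi : set (set X))
    (Delta : set (set (set X))) : Prop :=
  forall n W, Delta W -> Delta (fun A => Psi A /\ W (induced f n A)).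

From Stdlib Require Import Reals List Lra Lia.

(* (i) Every hyperspace-open set around A contains a Vietoris-type neighbourhood
   {B in Psi : B inside an open G, B meets U_1, ..., U_m} of A; for the far-miss
   sets G is an eps/2-neighbourhood of A.  One such neighbourhood reaches another
   at time n as soon as finitely many open pairs of X all do, and a finite set of
   witnesses for these pairs is a witnessing point of Psi.  Weak mixing of all
   orders on X supplies a common time for the pairs.
   (ii) Upper sets of basic open sets give weak mixing of X.  For commuting maps,
   any m in N(U1,U2) and N(V1,V2) gives
   N(U1 & w_m^-1 U2, V1 & w_m^-1 V2) included in N(U1,V1) & N(U2,V2),
   and iterating this yields weak mixing of every order (Furstenberg). *)

Section MetricOpen.
Context {X : Type} (d : X -> X -> R).

Lemma is_open_True : is_open d (fun _ => True).
Proof. intros x _. exists 1. split; [lra | auto]. Qed.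

Lemma is_open_inter (U V : set X) :
  is_open d U -> is_open d V -> is_open d (fun x => U x /\ V x).
Proof.
  intros HU HV x [Ux Vx].
  destruct (HU x Ux) as [r1 [Hr1 H1]], (HV x Vx) as [r2 [Hr2 H2]].
  exists (Rmin r1 r2). split; [apply Rmin_pos; auto |].
  intros y Hy. pose proof (Rmin_l r1 r2). pose proof (Rmin_r r1 r2).
  split; [apply H1 | apply H2]; lra.
Qed.

Hypothesis Hd : is_metric d.

Lemma is_open_nbhd (A : set X) eps : is_open d (nbhd d A eps).
Proof.
  destruct Hd as [_ [_ [Hsym Htri]]].
  intros x [a [Aa Hxa]]. exists (eps - d x a). split; [lra |].
  intros y Hy. exists a. split; auto.
  pose proof (Htri y x a). rewrite (Hsym y x) in *. lra.
Qed.

Lemma nbhd_self (A : set X) eps x : 0 < eps -> A x -> nbhd d A eps x.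
Proof.
  destruct Hd as [_ [Hzero _]]. intros Heps Ax.
  exists x. split; auto. rewrite (proj2 (Hzero x x) eq_refl). exact Heps.
Qed.

Lemma nbhd_nbhd (A B : set X) e1 e2 x :
  (forall b, B b -> nbhd d A e1 b) -> nbhd d B e2 x -> nbhd d A (e1 + e2) x.
Proof.
  destruct Hd as [_ [_ [_ Htri]]].
  intros HBA [b [Bb Hxb]]. destruct (HBA b Bb) as [a [Aa Hba]].
  exists a. split; auto. pose proof (Htri x b a). lra.
Qed.

End MetricOpen.

Section Iterates.
Context {X : Type} (f : nat -> X -> X).

Lemma continuous_omega (d : X -> X -> R) :
  (forall n, continuous d (f n)) -> forall n, continuous d (omega f n).
Proof.
  intros Hf n. induction n as [| n IH]; intros U HU; simpl; [exact HU |].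
  apply (IH (fun y => U (f n y))), Hf, HU.
Qed.

Hypothesis Hc : commutative f.

Lemma f_omega_comm k m x : f k (omega f m x) = omega f m (f k x).
Proof. induction m as [| m IH]; simpl; auto. rewrite Hc, IH. reflexivity. Qed.

Lemma omega_comm n m x : omega f n (omega f m x) = omega f m (omega f n x).
Proof. induction n as [| n IH]; simpl; auto. rewrite IH. apply f_omega_comm. Qed.

End Iterates.

Lemma list_choice {A B : Type} (P : A -> B -> Prop) (L : list A) :
  (forall p, In p L -> exists b, P p b) ->
  exists lb, (forall p, In p L -> exists b, In b lb /\ P p b) /\
             (forall b, In b lb -> exists p, In p L /\ P p b).
Proof.
  induction L as [| q L IH]; intros H.
  - exists nil. split; intros; simpl in *; tauto.
  - destruct IH as [lb [H1 H2]]; [intros p Hp; apply H; simpl; auto |].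
    destruct (H q (in_eq q L)) as [b Hb].
    exists (b :: lb). split.
    + intros p [<- | Hp]; [exists b; simpl; auto |].
      destruct (H1 p Hp) as [a [Ha Pa]]. exists a; simpl; auto.
    + intros a [<- | Ha]; [exists q; simpl; auto |].
      destruct (H2 a Ha) as [p [Hp Pp]]. exists p; simpl; auto.
Qed.

Lemma list_collect {A : Type} (Q : A -> Prop) (P : nat -> list A -> Prop) k :
  (forall i, (i < k)%nat -> exists l, (forall a, In a l -> Q a) /\ P i l) ->
  exists L, (forall a, In a L -> Q a) /\
            forall i, (i < k)%nat -> exists l, incl l L /\ P i l.
Proof.
  induction k as [| k IH]; intros H.
  - exists nil. split; [intros a [] | intros i Hi; lia].
  - destruct IH as [L [QL HL]]; [intros i Hi; apply H; lia |].
    destruct (H k (Nat.lt_succ_diag_r k)) as [l [Ql Pl]].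
    exists (L ++ l). split.
    + intros a Ha. apply in_app_or in Ha. destruct Ha; auto.
    + intros i Hi. destruct (Nat.eq_dec i k) as [-> | Hik].
      * exists l. split; auto. apply incl_appr, incl_refl.
      * destruct (HL i ltac:(lia)) as [l' [Hincl Pl']].
        exists l'. split; auto. apply incl_appl, Hincl.
Qed.

Section HittingTimes.
Context {T : Type} (isopen : set T -> Prop) (phi : nat -> T -> T).

Definition open_pair (p : set T * set T) : Prop :=
  isopen (fst p) /\ isopen (snd p) /\ nonempty (fst p) /\ nonempty (snd p).

Definition hits (n : nat) (p : set T * set T) : Prop :=
  exists x, fst p x /\ snd p (phi n x).

Lemma wm_all_orders_list : wm_all_orders isopen phi ->
  forall L, (forall p, In p L -> open_pair p) ->
  exists n, (1 <= n)%nat /\ forall p, In p L -> hits n p.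
Proof.
  intros Hwm L HL.
  set (dflt := (fun _ : T => True, fun _ : T => True)).
  destruct (Hwm (length L) (fun i => fst (nth i L dflt)) (fun i => snd (nth i L dflt)))
    as [n [Hn Hall]].
  { intros i Hi. apply HL, nth_In, Hi. }
  exists n. split; auto. intros p Hp.
  destruct (In_nth L p dflt Hp) as [i [Hi <-]]. apply Hall, Hi.
Qed.

Lemma weakly_mixing_pairs : weakly_mixing isopen phi ->
  forall p q, open_pair p -> open_pair q ->
  exists n, (1 <= n)%nat /\ hits n p /\ hits n q.
Proof.
  intros Hwm p q Hp Hq.
  destruct (Hwm (fun i => match i with O => fst p | _ => fst q end)
                (fun i => match i with O => snd p | _ => snd q end))
    as [n [Hn Hall]].
  { intros [| i] _; [exact Hp | exact Hq]. }
  exists n. split; [exact Hn | split; [apply (Hall 0%nat) | apply (Hall 1%nat)]; lia].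
Qed.

Section Furstenberg.
Hypothesis isopen_inter :
  forall U V, isopen U -> isopen V -> isopen (fun x => U x /\ V x).
Hypothesis isopen_preimage : forall n U, isopen U -> isopen (fun x => U (phi n x)).
Hypothesis phi_comm : forall n m x, phi n (phi m x) = phi m (phi n x).
Hypothesis Hwm : weakly_mixing isopen phi.

Lemma hits_inter_pair p q : open_pair p -> open_pair q ->
  exists r, open_pair r /\ forall n, hits n r -> hits n p /\ hits n q.
Proof.
  destruct p as [U1 V1], q as [U2 V2].
  intros [oU1 [oV1 [nU1 nV1]]] [oU2 [oV2 [nU2 nV2]]].
  destruct (weakly_mixing_pairs Hwm (U1, U2) (V1, V2)) as [m [_ [[x [Ux Ux']] [y [Vy Vy']]]]];
    try (repeat split; assumption).
  exists (fun z => U1 z /\ U2 (phi m z), fun z => V1 z /\ V2 (phi m z)). split.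
  - repeat split; simpl; auto; [exists x | exists y]; auto.
  - intros n [z [[Uz U2z] [Vz V2z]]]. split; [exists z; auto |].
    exists (phi m z). split; auto. simpl. rewrite phi_comm. exact V2z.
Qed.

Lemma hits_inter_finite k (U V : nat -> set T) :
  (forall i, (i < S k)%nat -> open_pair (U i, V i)) ->
  exists r, open_pair r /\
    forall n, hits n r -> forall i, (i < S k)%nat -> hits n (U i, V i).
Proof.
  induction k as [| k IH]; intros H.
  - exists (U 0%nat, V 0%nat). split; [apply H; lia |].
    intros n Hn i Hi. replace i with 0%nat by lia. exact Hn.
  - destruct IH as [r [Hr Hrk]]; [intros i Hi; apply H; lia |].
    destruct (hits_inter_pair r (U (S k), V (S k)) Hr (H (S k) ltac:(lia)))
      as [r' [Hr' Hr'k]].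
    exists r'. split; auto. intros n Hn i Hi.
    destruct (Hr'k n Hn) as [Hnr HnSk].
    destruct (Nat.eq_dec i (S k)) as [-> | Hik]; auto.
    apply Hrk; [exact Hnr | lia].
Qed.

Theorem wm_all_orders_of_weakly_mixing : wm_all_orders isopen phi.
Proof.
  intros [| k] U V H; [exists 1%nat; split; [lia | intros i Hi; lia] |].
  destruct (hits_inter_finite k U V) as [r [Hr Hrk]]; [intros i Hi; apply H, Hi |].
  destruct (weakly_mixing_pairs Hwm r r Hr Hr) as [n [Hn [Hnr _]]].
  exists n. split; auto. intros i Hi. exact (Hrk n Hnr i Hi).
Qed.

End Furstenberg.
End HittingTimes.

Section VietorisSets.
Context {X : Type}.

Definition vietoris (G : set X) (Ls : list (set X)) (B : set X) : Prop :=
  (forall x, B x -> G x) /\ (forall U, In U Ls -> exists x, B x /\ U x).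

Lemma vietoris_inter_app G G' Ls Ls' B :
  vietoris G Ls B -> vietoris G' Ls' B ->
  vietoris (fun x => G x /\ G' x) (Ls ++ Ls') B.
Proof.
  intros [BG HLs] [BG' HLs']. split; [intros x Bx; auto |].
  intros U HU. apply in_app_or in HU. destruct HU; auto.
Qed.

Lemma vietoris_inter_app_inv G G' Ls Ls' B :
  vietoris (fun x => G x /\ G' x) (Ls ++ Ls') B ->
  vietoris G Ls B /\ vietoris G' Ls' B.
Proof.
  intros [BG HL].
  split; split; try (intros x Bx; apply BG, Bx);
    intros U HU; apply HL, in_or_app; auto.
Qed.

Definition vietoris_pairs (G G' : set X) (Ls Ls' : list (set X)) : list (set X * set X) :=
  (G, G') :: map (fun U => (fun x => U x /\ G x, G')) Ls ++
             map (fun U' => (G, fun x => U' x /\ G' x)) Ls'.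

Lemma vietoris_pairs_in p G G' Ls Ls' : In p (vietoris_pairs G G' Ls Ls') ->
  p = (G, G') \/
  (exists U, In U Ls /\ p = (fun x => U x /\ G x, G')) \/
  (exists U', In U' Ls' /\ p = (G, fun x => U' x /\ G' x)).
Proof.
  intros [<- | Hp]; [left; reflexivity | right].
  apply in_app_or in Hp. destruct Hp as [Hp | Hp]; apply in_map_iff in Hp;
    destruct Hp as [U [<- HU]]; [left | right]; exists U; auto.
Qed.

Lemma vietoris_of_pairs G G' Ls Ls' (g : X -> X) (la : list X) :
  (forall p, In p (vietoris_pairs G G' Ls Ls') ->
     exists a, In a la /\ fst p a /\ snd p (g a)) ->
  (forall a, In a la -> exists p, In p (vietoris_pairs G G' Ls Ls') /\
     fst p a /\ snd p (g a)) ->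
  vietoris G Ls (fun y => In y la) /\ vietoris G' Ls' (img g (fun y => In y la)).
Proof.
  intros Hpairs Hla.
  assert (HGG' : forall a, In a la -> G a /\ G' (g a)).
  { intros a Ha. destruct (Hla a Ha) as [p [Hp [Hfst Hsnd]]].
    destruct (vietoris_pairs_in _ _ _ _ _ Hp) as [-> | [[U [_ ->]] | [U [_ ->]]]];
      simpl in *; tauto. }
  split; split.
  - intros a Ha. apply HGG', Ha.
  - intros U HU. destruct (Hpairs (fun x => U x /\ G x, G')) as [a [Ha [[Ua _] _]]].
    + right. apply in_or_app. left. apply in_map_iff. exists U; auto.
    + exists a; auto.
  - intros y [a [Ha ->]]. apply HGG', Ha.
  - intros U HU. destruct (Hpairs (G, fun x => U x /\ G' x)) as [a [Ha [_ [Ua _]]]].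
    + right. apply in_or_app. right. apply in_map_iff. exists U; auto.
    + exists (g a). split; auto. exists a; auto.
Qed.

End VietorisSets.

Section Vietoris.
Context {X : Type} (d : X -> X -> R) (Psi : set (set X)).

Definition vietoris_nbhd (W : set (set X)) (A : set X) : Prop :=
  exists G Ls, is_open d G /\ (forall U, In U Ls -> is_open d U) /\
    vietoris G Ls A /\ (forall B, Psi B -> vietoris G Ls B -> W B).

Lemma vietoris_nbhd_True A : vietoris_nbhd (fun _ => True) A.
Proof.
  exists (fun _ => True), nil.
  split; [apply is_open_True | split; [intros U [] | split; [split; auto; intros U [] | auto]]].
Qed.

Lemma vietoris_nbhd_inter W W' A : vietoris_nbhd W A -> vietoris_nbhd W' A ->
  vietoris_nbhd (fun B => W B /\ W' B) A.
Proof.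
  intros [G [Ls [oG [oLs [AGL HW]]]]] [G' [Ls' [oG' [oLs' [AGL' HW']]]]].
  exists (fun x => G x /\ G' x), (Ls ++ Ls'). split; [apply is_open_inter; auto |].
  split; [intros U HU; apply in_app_or in HU; destruct HU; auto |].
  split; [apply vietoris_inter_app; auto |].
  intros B PB HB. destruct (vietoris_inter_app_inv _ _ _ _ _ HB). auto.
Qed.

Lemma vietoris_nbhd_weaken W W' A :
  (forall B, Psi B -> W B -> W' B) -> vietoris_nbhd W A -> vietoris_nbhd W' A.
Proof.
  intros HWW' [G [Ls [oG [oLs [AGL HW]]]]].
  exists G, Ls. repeat split; auto; apply AGL.
Qed.

Lemma vietoris_nbhd_all (l : list (set (set X))) A :
  (forall S, In S l -> vietoris_nbhd S A) ->
  vietoris_nbhd (fun B => forall S, In S l -> S B) A.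
Proof.
  induction l as [| S l IH]; intros H.
  - apply (vietoris_nbhd_weaken (fun _ => True)); [intros B _ _ S' [] |].
    apply vietoris_nbhd_True.
  - apply (vietoris_nbhd_weaken (fun B => S B /\ forall S', In S' l -> S' B)).
    + intros B _ [SB HB] S' [<- | HS']; [exact SB | exact (HB S' HS')].
    + apply vietoris_nbhd_inter; [apply H, in_eq |].
      apply IH. intros S' HS'. apply H, in_cons, HS'.
Qed.

Lemma vietoris_nbhd_hit U A : is_open d U -> hit Psi U A -> vietoris_nbhd (hit Psi U) A.
Proof.
  intros oU [_ AU]. exists (fun _ => True), (U :: nil).
  split; [apply is_open_True |].
  split; [intros U' [<- | []]; exact oU |].
  split; [split; auto; intros U' [<- | []]; exact AU |].
  intros B PB [_ HB]. split; [exact PB | apply HB, in_eq].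
Qed.

Lemma vietoris_nbhd_miss E A : is_closed d E -> miss Psi E A -> vietoris_nbhd (miss Psi E) A.
Proof.
  intros cE [_ AE]. exists (fun x => ~ E x), nil.
  split; [exact cE | split; [intros U [] | split; [split; auto; intros U [] |]]].
  intros B PB [BE _]. split; auto.
Qed.

Lemma vietoris_nbhd_farmiss (Hd : is_metric d) E A :
  farmiss d Psi E A -> vietoris_nbhd (farmiss d Psi E) A.
Proof.
  intros [_ [eps [Heps HAE]]]. exists (nbhd d A (eps / 2)), nil.
  split; [apply is_open_nbhd, Hd | split; [intros U [] |]].
  split; [split; [intros x Ax; apply nbhd_self; auto; lra | intros U []] |].
  intros B PB [BA _]. split; [exact PB |].
  exists (eps / 2). split; [lra |].
  intros x Bx. apply HAE. replace eps with (eps / 2 + eps / 2) by lra.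
  apply (nbhd_nbhd d Hd A B); auto.
Qed.

Lemma vietoris_nbhd_same W W' A :
  same_set W W' -> vietoris_nbhd W' A -> vietoris_nbhd W A.
Proof. intros HWW'. apply vietoris_nbhd_weaken. intros B _. apply HWW'. Qed.

Lemma hit_miss_type_vietoris (Hd : is_metric d) Delta : hit_miss_type d Psi Delta ->
  exists Sub, generated_by Psi Sub Delta /\
    forall S A, Sub S -> S A -> vietoris_nbhd S A.
Proof.
  intros [Efam [HE [Hg | Hg]]]; [exists (hm_subbase d Psi Efam) | exists (hfm_subbase d Psi Efam)];
    (split; [exact Hg |]); intros S A [[U [oU HS]] | [E [HEf HS]]] SA;
    apply (vietoris_nbhd_same _ _ _ HS); apply HS in SA.
  - apply vietoris_nbhd_hit; auto.
  - apply vietoris_nbhd_miss; auto.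
  - apply vietoris_nbhd_hit; auto.
  - apply vietoris_nbhd_farmiss; auto.
Qed.

Section Generated.
Context (Sub : set (set (set X))) (Delta : set (set (set X))).
Hypothesis Hg : generated_by Psi Sub Delta.

Lemma generated_open_sub W A : Delta W -> W A -> Psi A.
Proof. intros DW WA. exact (proj1 (proj1 (Hg W) DW) A WA). Qed.

Lemma generated_open_vietoris :
  (forall S A, Sub S -> S A -> vietoris_nbhd S A) ->
  forall W A, Delta W -> W A -> vietoris_nbhd W A.
Proof.
  intros HSub W A DW WA.
  destruct (proj2 (proj1 (Hg W) DW) A WA) as [l [lSub [lA lW]]].
  apply (vietoris_nbhd_weaken _ _ _ lW), vietoris_nbhd_all.
  intros S HS. apply HSub; [apply lSub | apply lA]; exact HS.
Qed.

Lemma generated_open_union W :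
  (forall A, W A -> exists W', Delta W' /\ W' A /\ forall B, W' B -> W B) -> Delta W.
Proof.
  intros HW. apply (proj2 (Hg W)). split.
  - intros A WA. destruct (HW A WA) as [W' [DW' [W'A _]]].
    exact (generated_open_sub W' A DW' W'A).
  - intros A WA. destruct (HW A WA) as [W' [DW' [W'A W'W]]].
    destruct (proj2 (proj1 (Hg W') DW') A W'A) as [l [lSub [lA lW']]].
    exists l. repeat split; auto.
Qed.

End Generated.

Lemma vietoris_pairs_open G G' Ls Ls' A A' :
  is_open d G -> is_open d G' ->
  (forall U, In U Ls -> is_open d U) -> (forall U, In U Ls' -> is_open d U) ->
  vietoris G Ls A -> vietoris G' Ls' A' -> nonempty A -> nonempty A' ->
  forall p, In p (vietoris_pairs G G' Ls Ls') -> open_pair (is_open d) p.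
Proof.
  intros oG oG' oLs oLs' [AG AL] [A'G' A'L'] [a Aa] [a' A'a'] p Hp.
  destruct (vietoris_pairs_in _ _ _ _ _ Hp) as [-> | [[U [HU ->]] | [U [HU ->]]]];
    unfold open_pair; simpl.
  - repeat split; auto; [exists a | exists a']; auto.
  - destruct (AL U HU) as [x [Ax Ux]].
    repeat split; auto; [apply is_open_inter | exists x | exists a']; auto.
  - destruct (A'L' U HU) as [x [Ax Ux]].
    repeat split; auto; [apply is_open_inter | exists a | exists x]; auto.
Qed.

End Vietoris.

Section InducedSystem.
Context {X : Type} (d : X -> X -> R) (f : nat -> X -> X)
  (Psi : set (set X)) (Delta : set (set (set X))).
Hypothesis Hd : is_metric d.
Hypothesis HPsi_nonempty : forall A, Psi A -> nonempty A.
Hypothesis HFin : forall A, finite_nonempty A -> Psi A.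
Hypothesis HInv : forall n A, Psi A -> Psi (induced f n A).
Hypothesis HType : hit_miss_type d Psi Delta.

Definition reduces_to (W V : set (set X)) (L : list (set X * set X)) : Prop :=
  forall n la,
    (forall p, In p L -> exists a, In a la /\ fst p a /\ snd p (omega f n a)) ->
    (forall a, In a la -> exists p, In p L /\ fst p a /\ snd p (omega f n a)) ->
    W (fun y => In y la) /\ V (induced f n (fun y => In y la)).

Lemma open_hyper_pair_reduces W V :
  Delta W -> Delta V -> nonempty W -> nonempty V ->
  exists L, (forall p, In p L -> open_pair (is_open d) p) /\ reduces_to W V L.
Proof.
  intros DW DV [A WA] [A' VA'].
  destruct (hit_miss_type_vietoris d Psi Hd Delta HType) as [Sub [Hg HSub]].
  destruct (generated_open_vietoris d Psi Sub Delta Hg HSub W A DW WA)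
    as [G [Ls [oG [oLs [AGL HW]]]]].
  destruct (generated_open_vietoris d Psi Sub Delta Hg HSub V A' DV VA')
    as [G' [Ls' [oG' [oLs' [AGL' HV]]]]].
  exists (vietoris_pairs G G' Ls Ls'). split.
  - apply (vietoris_pairs_open d G G' Ls Ls' A A'); auto; apply HPsi_nonempty;
      [exact (generated_open_sub Psi Sub Delta Hg W A DW WA)
      | exact (generated_open_sub Psi Sub Delta Hg V A' DV VA')].
  - intros n la Hpairs Hla.
    destruct (vietoris_of_pairs G G' Ls Ls' (omega f n) la Hpairs Hla) as [VW VV].
    assert (Pla : Psi (fun y => In y la)).
    { apply HFin. exists la. split; [| tauto].
      destruct (Hpairs (G, G') (in_eq _ _)) as [a [Ha _]].
      destruct la; [destruct Ha | discriminate]. }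
    split; [apply HW | apply HV]; auto.
Qed.

Theorem induced_wm_order k :
  wm_all_orders (is_open d) (omega f) -> wm_order Delta (induced f) k.
Proof.
  intros Hwm W V HWV.
  destruct (list_collect (open_pair (is_open d)) (fun i L => reduces_to (W i) (V i) L) k)
    as [L [HL Hred]].
  { intros i Hi. destruct (HWV i Hi) as [DW [DV [nW nV]]].
    apply open_hyper_pair_reduces; auto. }
  destruct (wm_all_orders_list (is_open d) (omega f) Hwm L HL) as [n [Hn Hhits]].
  exists n. split; auto. intros i Hi.
  destruct (Hred i Hi) as [l [Hincl Hl]].
  destruct (list_choice (fun p a => fst p a /\ snd p (omega f n a)) l) as [la [H1 H2]].
  { intros p Hp. apply Hhits, Hincl, Hp. }
  exists (fun y => In y la). apply Hl; auto.
Qed.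

Section UpperBase.
Context (beta : set (set X)).
Hypothesis Hbeta : is_base d beta.
Hypothesis Hupper : forall B, beta B -> Delta (upper Psi B).

Definition upper_in (U : set X) : set (set X) :=
  fun A => exists B, beta B /\ (forall x, B x -> U x) /\ upper Psi B A.

Lemma upper_in_open U : Delta (upper_in U).
Proof.
  destruct (hit_miss_type_vietoris d Psi Hd Delta HType) as [Sub [Hg _]].
  apply (generated_open_union Psi Sub Delta Hg).
  intros A [B [bB [BU AB]]]. exists (upper Psi B). split; [apply Hupper, bB |].
  split; [exact AB |]. intros A' A'B. exists B; auto.
Qed.

Lemma finite_nonempty_singleton (x : X) : finite_nonempty (singleton x).
Proof.
  exists (x :: nil). split; [discriminate |].
  intros y. unfold singleton. simpl. split; [intros ->; auto | intros [-> | []]; auto].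
Qed.

Lemma upper_in_nonempty U : is_open d U -> nonempty U -> nonempty (upper_in U).
Proof.
  intros oU [x Ux]. destruct (proj2 Hbeta U x oU Ux) as [B [bB [Bx BU]]].
  exists (singleton x). exists B. split; [exact bB | split; [exact BU |]].
  split; [apply HFin, finite_nonempty_singleton |]. intros y ->. exact Bx.
Qed.

Theorem wm_order_of_induced k :
  wm_order Delta (induced f) k -> wm_order (is_open d) (omega f) k.
Proof.
  intros Hw U V HUV.
  destruct (Hw (fun i => upper_in (U i)) (fun i => upper_in (V i))) as [n [Hn Hall]].
  { intros i Hi. destruct (HUV i Hi) as [oU [oV [nU nV]]].
    repeat split; auto using upper_in_open, upper_in_nonempty. }
  exists n. split; auto. intros i Hi.
  destruct (Hall i Hi) as [A [[B [_ [BU [PA AB]]]] [C [_ [CV [_ AC]]]]]].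
  destruct (HPsi_nonempty A PA) as [z Az].
  exists z. split; [apply BU, AB, Az | apply CV, AC; exists z; auto].
Qed.

End UpperBase.
End InducedSystem.

Theorem mainTheorem4 (X : Type) (d : X -> X -> R) (f : nat -> X -> X)
    (Psi : set (set X)) (Delta : set (set (set X)))
    (Hd : is_metric d) (Hcpt : compact_space d)
    (Hf : forall n, continuous d (f n))
    (HPsiK : forall A, Psi A -> nonempty A /\ compact_set d A)
    (HFin : forall A, finite_nonempty A -> Psi A)
    (HInv : forall n A, Psi A -> Psi (induced f n A))
    (HType : hit_miss_type d Psi Delta)
    (HAdm : admissible d Psi Delta)
    (HCont : induced_continuous f Psi Delta) :
  (wm_all_orders (is_open d) (omega f) ->
     weakly_mixing Delta (induced f)) /\
  (commutative f ->
   (exists beta : set (set X), is_base d beta /\ forall B, beta B -> Delta (upper Psi B)) ->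
   weakly_mixing Delta (induced f) ->
   wm_all_orders (is_open d) (omega f)).
Proof.
  assert (HPsi_nonempty : forall A, Psi A -> nonempty A) by (intros A HA; apply HPsiK, HA).
  split.
  - exact (induced_wm_order d f Psi Delta Hd HPsi_nonempty HFin HInv HType 2).
  - intros Hc [beta [Hbeta Hupper]] Hw.
    apply (wm_all_orders_of_weakly_mixing (is_open d) (omega f)).
    + apply is_open_inter.
    + intros n U HU. exact (continuous_omega f d Hf n U HU).
    + apply omega_comm, Hc.
    + exact (wm_order_of_induced d f Psi Delta Hd HPsi_nonempty HFin HType
               beta Hbeta Hupper 2 Hw).
Qed.
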